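(* Let $a_+>0$, $I_0>0$, let $t_0$ be an integer time, and let $N(t_0),N(t_0+1),N(t_0+2),\dots$ be nonnegative real numbers. Let $m$ be an integer with $0\le m<\lfloor a_+\rfloor+1$, and consider the linear system in the $m+1$ unknowns $x_0,\dots,x_m$ (where $x_a$ stands for $\mathcal{R}(t_0+m,a)$) consisting of the $m+1$ equations, for $k=0,1,\dots,m$, $$\sum_{j=0}^{k-1}N(t_0+k-j)\,x_{m-k+j}\;+\;I_0\,x_m\;+\;\sum_{d=1}^{m-k}N(t_0+m-d)\,x_d\;=\;N(t_0+m).$$ If $\prod_{j=1}^{m}N(t_0+j)\neq0$ (the empty product being $1$), then this linear system has a unique solution $(x_0,\dots,x_m)$.
   Context: This is the day-by-day (time step $1$) discretization of an infection-age-structured SIRS model started at time $t_0$ from a single cohort of $I_0$ infected individuals of infection age $0$; $N(t)$ is the number of newly infected individuals on day $t$, and $\mathcal{R}(t,a)=\tau(t)S(t)e^{-(\nu+D)a}\beta(a)$ is the reproductive power (rate at which an infectious individual at time $t$ and infection age $a$ produces secondary cases), with $\beta(a)=0$ for $a\ge a_+$. The $k$-th equation expresses $N(t_0+m)$ via the cohort structure present at time $t_0+k$, using that the cohort of infection age $j$ at time $t_0+k$ has size $e^{-(\nu+D)j}N(t_0+k-j)$ (and $I_0$ for the initial cohort). *)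

From HB Require Import structures.
From mathcomp Require Import all_boot all_order all_algebra.
From mathcomp Require Import all_classical all_reals.
Set Implicit Arguments. Unset Strict Implicit. Unset Printing Implicit Defensive.
Import Order.TTheory GRing.Theory Num.Theory.
Local Open Scope ring_scope.

Definition sirs_eq (R : realType) (N : int -> R) (t0 : int) (I0 : R)
    (m : nat) (x : 'cV[R]_m.+1) (k : nat) : Prop :=
  \sum_(0 <= j < k) N (t0 + k%:Z - j%:Z) * x (inord (m - k + j)) 0
  + I0 * x (inord m) 0
  + \sum_(1 <= d < (m - k).+1) N (t0 + m%:Z - d%:Z) * x (inord d) 0
  = N (t0 + m%:Z).

Definition sirs_system (R : realType) (N : int -> R) (t0 : int) (I0 : R)
    (m : nat) (x : 'cV[R]_m.+1) : Prop :=
  forall k : nat, (k <= m)%N -> sirs_eq N t0 I0 x k.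

From HB Require Import structures.
From mathcomp Require Import all_boot all_order all_algebra.
From mathcomp Require Import all_classical all_reals.
From mathcomp Require Import zify ring lra.
Set Implicit Arguments. Unset Strict Implicit.
Import Order.TTheory GRing.Theory Num.Theory.
Local Open Scope ring_scope.

(* Write c_i := N(t0+m-i) x_i for the secondary cases produced on day t0+m
   by the cohort of infection age i.  Equation k then reads
     c_(m-k) + ... + c_(m-1) + I0 x_m + c_1 + ... + c_(m-k) = N(t0+m),
   so subtracting equation k from equation k+1 gives c_(m-k-1) = c_(m-k):
   all c_i equal c_m = N(t0) x_m.  The system thus collapses to
   (m N(t0) + I0) x_m = N(t0+m) together with N(t0+m-i) x_i = N(t0) x_m,
   which determines x uniquely since m N(t0) + I0 > 0 and N(t0+1), ...,
   N(t0+m) are nonzero. *)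

Section SirsSystem.
Variables (R : realType) (I0 : R) (t0 : int) (N : int -> R) (m : nat).
Implicit Types (x : 'cV[R]_m.+1) (c : R).

Definition cohort x (i : nat) : R := N (t0 + m%:Z - i%:Z) * x (inord i) 0.

Lemma cohort_last x : cohort x m = N t0 * x (inord m) 0.
Proof. by rewrite /cohort addrK. Qed.

Lemma sirs_eq_cohortE x k : (k <= m)%N ->
  sirs_eq N t0 I0 x k <->
  \sum_(m - k <= i < m) cohort x i + I0 * x (inord m) 0
    + \sum_(1 <= i < (m - k).+1) cohort x i = N (t0 + m%:Z).
Proof.
move=> le_km; rewrite /sirs_eq.
suff -> : \sum_(0 <= j < k) N (t0 + k%:Z - j%:Z) * x (inord (m - k + j)) 0
        = \sum_(m - k <= i < m) cohort x i by [].
rewrite -[in RHS](add0n (m - k)%N) big_addn.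
have -> : (m - (m - k) = k)%N by lia.
by apply: eq_big_nat => j _; rewrite /cohort addnC; congr (N _ * _); lia.
Qed.

Lemma cohort_step x k : (k < m)%N ->
  sirs_eq N t0 I0 x k -> sirs_eq N t0 I0 x k.+1 ->
  cohort x (m - k.+1) = cohort x (m - k).
Proof.
move=> lt_km /(sirs_eq_cohortE _ (ltnW lt_km)) + /(sirs_eq_cohortE _ lt_km).
set p := (m - k.+1)%N; have -> : (m - k = p.+1)%N by rewrite /p; lia.
rewrite (big_nat_recr p.+1) ?(@big_ltn _ _ _ p) //=; try lia.
by move=> eq_k eq_k1; lra.
Qed.

Lemma sirs_system_cohort_const x : sirs_system N t0 I0 x ->
  forall i, (i <= m)%N -> cohort x i = cohort x m.
Proof.
move=> sol_x i le_im.
have -> : i = (m - (m - i))%N by lia.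
elim: (m - i)%N (leq_subr i m) => [|k IHk] le_km; first by rewrite subn0.
by rewrite (cohort_step le_km (sol_x _ (ltnW le_km)) (sol_x _ le_km)) IHk // ltnW.
Qed.

Lemma sirs_eq_cohort_const x c k :
  (forall i, (i <= m)%N -> cohort x i = c) -> (k <= m)%N ->
  sirs_eq N t0 I0 x k <-> c *+ m + I0 * x (inord m) 0 = N (t0 + m%:Z).
Proof.
move=> const_c le_km; apply: iff_trans (sirs_eq_cohortE _ le_km) _.
have const_sum p q : (q <= m.+1)%N -> \sum_(p <= i < q) cohort x i = c *+ (q - p).
  move=> le_q; rewrite -sumr_const_nat; apply: eq_big_nat => i /andP[_ lt_iq].
  by apply: const_c; lia.
rewrite !const_sum ?ltnS ?leq_subr // subSS subn0 subKn //.
by rewrite addrAC -mulrnDr subnKC.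
Qed.

Lemma sirs_systemP x :
  sirs_system N t0 I0 x <->
  (forall i, (i <= m)%N -> cohort x i = N t0 * x (inord m) 0)
  /\ (m%:R * N t0 + I0) * x (inord m) 0 = N (t0 + m%:Z).
Proof.
set xm := x (inord m) 0.
have total_eq : (N t0 * xm) *+ m + I0 * xm = (m%:R * N t0 + I0) * xm.
  by rewrite -mulr_natl; ring.
split=> [sol_x | [const_c total] k le_km].
- have const_c i : (i <= m)%N -> cohort x i = N t0 * xm.
    by move=> le_im; rewrite sirs_system_cohort_const // cohort_last.
  split=> //; rewrite -total_eq.
  exact/(sirs_eq_cohort_const const_c (leq0n m))/sol_x.
- by apply/(sirs_eq_cohort_const const_c le_km); rewrite total_eq.
Qed.

Definition sirs_solution : 'cV[R]_m.+1 :=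
  let xm := N (t0 + m%:Z) / (m%:R * N t0 + I0) in
  \col_(i < m.+1) if i == m :> nat then xm else N t0 * xm / N (t0 + m%:Z - i%:Z).

Hypotheses (total_neq0 : m%:R * N t0 + I0 != 0)
  (N_neq0 : forall i, (i < m)%N -> N (t0 + m%:Z - i%:Z) != 0).

Lemma sirs_solutionP : sirs_system N t0 I0 sirs_solution.
Proof.
apply/sirs_systemP; rewrite /cohort !mxE inordK // eqxx; split.
- move=> i le_im; rewrite mxE inordK //.
  case: eqP => [->|/eqP ne_im]; first by rewrite addrK mulrC.
  by rewrite mulrC divfK // N_neq0 // ltn_neqAle ne_im.
- by rewrite mulrC divfK.
Qed.

Lemma sirs_system_uniq x y :
  sirs_system N t0 I0 x -> sirs_system N t0 I0 y -> x = y.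
Proof.
move=> /sirs_systemP[cohort_x total_x] /sirs_systemP[cohort_y total_y].
have last_eq : x (inord m) 0 = y (inord m) 0.
  by apply: (mulfI total_neq0); rewrite total_x total_y.
apply/matrixP => i j; rewrite (ord1 j) {j}.
have [lt_im | le_mi] := ltnP i m.
- apply: (mulfI (N_neq0 lt_im)).
  have := cohort_x i (ltnW lt_im); have := cohort_y i (ltnW lt_im).
  by rewrite /cohort inord_val last_eq => -> ->.
- have -> : i = inord m by apply/val_inj; rewrite /= inordK //; have := ltn_ord i; lia.
  exact: last_eq.
Qed.

End SirsSystem.

Unset Implicit Arguments. Set Strict Implicit.

Theorem theorem5p2 (R : realType) (aplus I0 : R) (t0 : int) (N : int -> R)
    (m : nat) :
  0 < aplus -> 0 < I0 ->
  (forall k : nat, 0 <= N (t0 + k%:Z)) ->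
  m%:Z < Num.floor aplus + 1 ->
  \prod_(1 <= j < m.+1) N (t0 + j%:Z) != 0 ->
  exists x : 'cV[R]_m.+1,
    sirs_system N t0 I0 x /\ (forall y : 'cV[R]_m.+1, sirs_system N t0 I0 y -> y = x).
Proof.
(* a_+ only bounds m to the support of beta; the algebra never uses it. *)
move=> _ I0_gt0 N_ge0 _ prod_neq0.
have total_neq0 : m%:R * N t0 + I0 != 0.
  have := N_ge0 0%N; rewrite addr0 => N0_ge0.
  by rewrite lt0r_neq0 // ltr_wpDl // mulr_ge0.
have N_neq0 i : (i < m)%N -> N (t0 + m%:Z - i%:Z) != 0.
  move=> lt_im; move: prod_neq0; rewrite prodf_seq_neq0 => /allP /(_ (m - i)%N).
  rewrite mem_index_iota => /(_ ltac:(lia)).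
  by have -> : t0 + m%:Z - i%:Z = t0 + (m - i)%N%:Z by lia.
have sol_x := sirs_solutionP total_neq0 N_neq0.
exists (sirs_solution I0 t0 N m); split=> // y sol_y.
exact: (sirs_system_uniq total_neq0 N_neq0 sol_y sol_x).
Qed.
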